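(* Let $\mathcal{X}$ be a finite set, $\phi\notin\mathcal{X}$, $L,T\in\mathbb{N}$, positions $i_0,\dots,i_{T-1}\in\{0,\dots,L-1\}$ fixed, and $\Pi_t$ ($t=0,\dots,T-1$) probability distributions on $\mathcal{X}\cup\{\phi\}$. Let $X_0\sim P^*$ on $\mathcal{X}^L$, let $Z_0,\dots,Z_{T-1}$ be independent, independent of $X_0$, with $Z_t\sim\Pi_t$, and define the forward process by $X_{t+1,j}=X_{t,j}$ for $j\ne i_t$, $X_{t+1,i_t}=X_{t,i_t}$ if $Z_t=\phi$, and $X_{t+1,i_t}=Z_t$ if $Z_t\in\mathcal{X}$. Let $P_t$ denote the law of $X_t$. Define the reverse Glauber dynamics as follows: given $\hat X_{t+1}\in\mathcal{X}^L$, set $\hat X_{t,j}=\hat X_{t+1,j}$ for all $j\neq i_t$, and sample $\hat X_{t,i_t}$ from the distribution $a\mapsto\mathbb{P}\big(X_{t,i_t}=a\mid X_{t+1,-i_t}=\hat X_{t+1,-i_t}\big)$ (computed under the forward process). If $\hat X_T\sim P_T$ and $\hat X_0$ is obtained by applying the reverse Glauber dynamics successively for $t=T-1,T-2,\dots,0$, then $\hat X_0\sim P^*$.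
   Context: For $x\in\mathcal{X}^L$ and $i\in\{0,\dots,L-1\}$, $x_i$ is the $i$-th coordinate and $x_{-i}\in\mathcal{X}^{L-1}$ is the sequence obtained by deleting the $i$-th coordinate. *)

From HB Require Import structures.
From mathcomp Require Import all_boot all_order all_algebra.
Set Implicit Arguments. Unset Strict Implicit. Unset Printing Implicit Defensive.
Import Order.TTheory GRing.Theory Num.Theory.
Local Open Scope ring_scope.

Notation state X L := {ffun 'I_L -> X}.

Definition is_distr (R : realFieldType) (A : finType) (p : A -> R) : Prop :=
  (forall a, 0 <= p a) /\ \sum_(a : A) p a = 1.

Definition del (X : finType) (L : nat) (i : 'I_L) (x : state X L) : seq X :=
  [seq x j | j <- enum 'I_L & j != i].

(* One forward update at position i with noise z (None = phi). *)
Definition step (X : finType) (L : nat) (i : 'I_L) (x : state X L)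
  (z : option X) : state X L :=
  match z with
  | None => x
  | Some a => [ffun j => if j == i then a else x j]
  end.

(* X_t as a function of X_0 and (Z_0, ..., Z_{T-1}). *)
Fixpoint fwd (X : finType) (L T : nat) (pos : 'I_T -> 'I_L)
  (x0 : state X L) (zs : {ffun 'I_T -> option X}) (t : nat) : state X L :=
  match t with
  | 0 => x0
  | t'.+1 =>
      let x := fwd pos x0 zs t' in
      match insub t' with
      | Some s => step (pos s) x (zs s)
      | None => x
      end
  end.

(* Sample space: (X_0, Z_0..Z_{T-1}) with the product (independent) law. *)
Definition Omega (X : finType) (L T : nat) : finType :=
  (state X L * {ffun 'I_T -> option X})%type.

Definition weight (R : realFieldType) (X : finType) (L T : nat)
  (Pstar : state X L -> R) (Pi : 'I_T -> option X -> R) (w : Omega X L T) : R :=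
  Pstar w.1 * \prod_(t < T) Pi t (w.2 t).

Definition prob (R : realFieldType) (X : finType) (L T : nat)
  (Pstar : state X L -> R) (Pi : 'I_T -> option X -> R)
  (E : pred (Omega X L T)) : R :=
  \sum_(w | E w) weight Pstar Pi w.

Definition Plaw (R : realFieldType) (X : finType) (L T : nat)
  (pos : 'I_T -> 'I_L) (Pstar : state X L -> R) (Pi : 'I_T -> option X -> R)
  (t : nat) (x : state X L) : R :=
  prob Pstar Pi [pred w | fwd pos w.1 w.2 t == x].

(* P(X_{t,i_t} = a | X_{t+1,-i_t} = y_{-i_t}) under the forward process
   (MathComp convention: 0 if the conditioning event has probability 0). *)
Definition cond (R : realFieldType) (X : finType) (L T : nat)
  (pos : 'I_T -> 'I_L) (Pstar : state X L -> R) (Pi : 'I_T -> option X -> R)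
  (t : 'I_T) (y : state X L) (a : X) : R :=
  let i := pos t in
  prob Pstar Pi [pred w | (fwd pos w.1 w.2 t i == a) &&
                          (del i (fwd pos w.1 w.2 t.+1) == del i y)]
  / prob Pstar Pi [pred w | del i (fwd pos w.1 w.2 t.+1) == del i y].

(* One reverse Glauber step at time t: law of hat X_t from law mu of hat X_{t+1}. *)
Definition rev_step (R : realFieldType) (X : finType) (L T : nat)
  (pos : 'I_T -> 'I_L) (Pstar : state X L -> R) (Pi : 'I_T -> option X -> R)
  (t : 'I_T) (mu : state X L -> R) (x : state X L) : R :=
  \sum_(y : state X L)
     mu y * ((([forall j, (j != pos t) ==> (x j == y j)] : bool)%:R)
             * cond pos Pstar Pi t y (x (pos t))).

From HB Require Import structures.
From mathcomp Require Import all_boot all_order all_algebra.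
Set Implicit Arguments. Unset Strict Implicit. Unset Printing Implicit Defensive.
Import Order.TTheory GRing.Theory Num.Theory.
Local Open Scope ring_scope.

(* Step t only touches coordinate i = i_t, so X_t = x iff X_{t,i} = x_i and
   X_{t+1,-i} = x_{-i}.  Summing P_{t+1} over the states y with y_{-i} = x_{-i}
   gives the probability D of the conditioning event of the reverse kernel, so
   one reverse step produces D * P(X_t = x) / D = P_t(x); when D = 0 both sides
   vanish.  Iterating from P_T down to P_0 = P^* proves the claim. *)

Lemma del_eq (X : finType) (L : nat) (i : 'I_L) (u v : state X L) :
  (del i u == del i v) = [forall j, (j != i) ==> (u j == v j)].
Proof.
apply/eqP/forallP => [eq_uv j|eq_uv].
  apply/implyP => ji; have := proj2 (eq_in_map u v _) eq_uv j.
  by rewrite mem_filter mem_enum ji andbT => ->.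
apply/eq_in_map => j; rewrite mem_filter mem_enum andbT => ji.
by have /implyP/(_ ji)/eqP := eq_uv j.
Qed.

Lemma ffun_eq_del (X : finType) (L : nat) (i : 'I_L) (u v : state X L) :
  (u == v) = (u i == v i) && (del i u == del i v).
Proof.
rewrite del_eq; apply/eqP/andP => [-> | [/eqP eq_i /forallP eq_del]].
  by split=> //; apply/forallP => j; apply/implyP.
apply/ffunP => j; have [-> // | ji] := eqVneq j i.
by have /implyP/(_ ji)/eqP := eq_del j.
Qed.

Lemma step_neq (X : finType) (L : nat) (i : 'I_L) (u : state X L) z j :
  j != i -> step i u z j = u j.
Proof. by case: z => [a|] //= ji; rewrite ffunE (negbTE ji). Qed.

Lemma del_step (X : finType) (L : nat) (i : 'I_L) (u : state X L) z :
  del i (step i u z) = del i u.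
Proof. by apply/eqP; rewrite del_eq; apply/forallP => j; apply/implyP => /step_neq ->. Qed.

Lemma fwdS (X : finType) (L T : nat) (pos : 'I_T -> 'I_L) x0 zs (t : 'I_T) :
  @fwd X L T pos x0 zs t.+1 = step (pos t) (fwd pos x0 zs t) (zs t).
Proof. by rewrite /=; case: insubP => [s _ /val_inj -> // |]; rewrite ltn_ord. Qed.

Lemma mulr_div_le (R : realFieldType) (n d : R) :
  0 <= n -> n <= d -> d * (n / d) = n.
Proof.
move=> n_ge0 le_nd; have [d0 | dn0] := eqVneq d 0; last by rewrite mulrC divfK.
by rewrite d0 mul0r; apply/le_anti; rewrite n_ge0 -d0.
Qed.

Section ForwardProcess.
Variables (R : realFieldType) (X : finType) (L T : nat) (pos : 'I_T -> 'I_L).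
Variables (Pstar : state X L -> R) (Pi : 'I_T -> option X -> R).
Hypothesis Pstar_ge0 : forall x, 0 <= Pstar x.
Hypothesis Pi_ge0 : forall t z, 0 <= Pi t z.
Hypothesis Pi_sum1 : forall t, \sum_z Pi t z = 1.

Local Notation prob := (prob Pstar Pi).
Local Notation Plaw := (Plaw pos Pstar Pi).
Local Notation Xt w t := (fwd pos w.1 w.2 t).

Lemma prob_ge0 E : 0 <= prob E.
Proof.
apply: sumr_ge0 => w _; apply: mulr_ge0 => //.
by apply: prodr_ge0 => t _.
Qed.

Lemma prob_sub (E F : pred (Omega X L T)) :
  (forall w, E w -> F w) -> prob E <= prob F.
Proof.
move=> sEF; rewrite /prob [leLHS]big_mkcond [leRHS]big_mkcond.
apply: ler_sum => w _; case: ifP => [/sEF -> // | _].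
case: ifP => // _; apply: mulr_ge0 => //; exact: prodr_ge0.
Qed.

Lemma sum_prob_mulr_pred (f : Omega X L T -> state X L) (p : pred (state X L)) :
  \sum_y prob [pred w | f w == y] * (p y)%:R = prob [pred w | p (f w)].
Proof.
under eq_bigr do rewrite /prob big_mkcond mulr_suml.
rewrite exchange_big /prob [RHS]big_mkcond; apply: eq_bigr => w _ /=.
rewrite (bigD1 (f w)) //= eqxx big1 ?addr0; last first.
  by move=> y /negbTE; rewrite eq_sym => ->; rewrite mul0r.
by case: (p (f w)); rewrite ?mulr1 ?mulr0.
Qed.

Lemma rev_stepE (t : 'I_T) mu x :
  rev_step pos Pstar Pi t mu x =
  (\sum_y mu y * (del (pos t) y == del (pos t) x)%:R) * cond pos Pstar Pi t x (x (pos t)).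
Proof.
rewrite /rev_step mulr_suml; apply: eq_bigr => y _.
rewrite [del _ y == _]eq_sym -del_eq.
have [del_xy | _] := eqVneq (del (pos t) x) (del (pos t) y); last by rewrite !(mul0r, mulr0).
by rewrite /cond del_xy !mul1r mulr1.
Qed.

Lemma rev_step_Plaw (t : 'I_T) mu :
  mu =1 Plaw t.+1 -> rev_step pos Pstar Pi t mu =1 Plaw t.
Proof.
move=> mu_law x; rewrite rev_stepE /cond.
under eq_bigr do rewrite mu_law.
rewrite (sum_prob_mulr_pred (fun w => Xt w t.+1) (fun y => del (pos t) y == del (pos t) x)).
have -> : prob [pred w | (Xt w t (pos t) == x (pos t)) &&
                         (del (pos t) (Xt w t.+1) == del (pos t) x)] = Plaw t x.
  by apply: eq_bigl => w; rewrite !inE fwdS del_step -ffun_eq_del.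
apply: mulr_div_le; first exact: prob_ge0.
by apply: prob_sub => w /eqP Xt_x; rewrite inE fwdS del_step Xt_x.
Qed.

Lemma Plaw0 x : Plaw 0 x = Pstar x.
Proof.
rewrite /Plaw /prob /weight (eq_bigl (fun w => (w.1 == x) && true)) => [|w]; last first.
  by rewrite andbT.
rewrite -(pair_big_dep (pred1 x) (fun _ _ => true)
  (fun a (zs : {ffun 'I_T -> option X}) => Pstar a * \prod_(t < T) Pi t (zs t))).
by rewrite big_pred1_eq -mulr_sumr -bigA_distr_bigA /= big1 ?mulr1 // => t _.
Qed.

End ForwardProcess.

Theorem lemma2 (R : realFieldType) (X : finType) (L T : nat)
  (pos : 'I_T -> 'I_L) (Pstar : {ffun 'I_L -> X} -> R)
  (Pi : 'I_T -> option X -> R)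
  (hPstar : is_distr Pstar) (hPi : forall t, is_distr (Pi t))
  (Q : nat -> {ffun 'I_L -> X} -> R)
  (hQT : forall x, Q T x = Plaw pos Pstar Pi T x)
  (hQ : forall (t : 'I_T) x, Q (nat_of_ord t) x = rev_step pos Pstar Pi t (Q t.+1) x) :
  forall x, Q 0%N x = Pstar x.
Proof.
have Pi_ge0 t := (hPi t).1; have Pi_sum1 t := (hPi t).2.
have Q_law n : (n <= T)%N -> Q (T - n)%N =1 Plaw pos Pstar Pi (T - n).
  elim: n => [|n IHn] le_nT x; first by rewrite subn0.
  have lt_tT : (T - n.+1 < T)%N by rewrite ltn_subrL (leq_trans _ le_nT).
  rewrite (hQ (Ordinal lt_tT)) (rev_step_Plaw hPstar.1 Pi_ge0) // => y /=.
  by rewrite subnSK // IHn // ltnW.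
by move=> x; rewrite -(subnn T) Q_law // subnn (Plaw0 _ _ Pi_sum1).
Qed.
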